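(* Let $G=(V,E)$ be an undirected graph with $n$ vertices and a priori maximum vertex degree $\Delta$, and let $\pi$ be a uniformly random ordering of $V$. Run the modified parallel MIS procedure (described in the context) on $(G,\pi)$, choosing in the $i$-th round a prefix parameter $\delta=\Omega(2^i\log(n)/\Delta)$ (i.e., $\delta\ge c\,2^i\log(n)/\Delta$ for a sufficiently large constant $c$). Then, with high probability, after the $i$-th round all remaining vertices have degree at most $\Delta/2^i$ in the remaining graph.
   Context: For an ordered vertex set $V$ and $0<\delta\le1$, the $\delta$-prefix $P(V,\pi,\delta)$ is the set of the $\delta|V|$ earliest vertices of $V$ in $\pi$. For a vertex set $U$, $N(U)$ is the set of neighbors of vertices of $U$ and $G[U]$ the induced subgraph. The lexicographically first MIS of a graph with respect to $\pi$ is the output of the sequential greedy algorithm that repeatedly adds the first remaining vertex in order $\pi$ and deletes it and its neighbors. The modified parallel MIS procedure on $(G=(V,E),\pi)$: if $V=\emptyset$ return $\emptyset$; otherwise choose a prefix parameter $\delta$ (possibly depending on the current graph), let $P=P(V,\pi,\delta)$, let $W$ be the lexicographically first MIS of $G[P]$ with respect to $\pi$, set $V'=V\setminus(P\cup N(W))$, and return $W$ together with the result of recursing on $(G[V'],\pi)$. Each recursive call is a round. ''With high probability'' means with probability at least $1-1/n^{c'}$ for any constant $c'$ (affecting the constants in the asymptotic notation), where $n$ is the original number of vertices. *)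

From HB Require Import structures.
From mathcomp Require Import all_boot all_order all_fingroup all_algebra.
From mathcomp Require Import all_classical all_reals.
From mathcomp Require Import exp.
Set Implicit Arguments. Unset Strict Implicit. Unset Printing Implicit Defensive.
Import Order.TTheory GRing.Theory Num.Theory.

Definition simple_graph (V : finType) (e : rel V) : Prop :=
  symmetric e /\ irreflexive e.

Section MIS.
Variables (V : finType) (e : rel V).

(* The ordering pi of V, given by a permutation: rank of v is its position. *)
Definition rank (pi : {perm V}) (v : V) : nat := enum_rank (pi v).

Definition nbrs_in (U : {set V}) (v : V) : {set V} := [set u in U | e v u].

Definition deg_in (U : {set V}) (v : V) : nat := #|nbrs_in U v|.

Definition nbrs_set (W : {set V}) : {set V} := [set u | [exists w in W, e w u]].

Fixpoint greedy_fuel (pi : {perm V}) (fuel : nat) (U : {set V}) : {set V} :=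
  match fuel with
  | 0 => finset.set0
  | k.+1 =>
      match [pick v in U | [forall u in U, rank pi v <= rank pi u]] with
      | None => finset.set0
      | Some v => v |: greedy_fuel pi k (U :\: (v |: nbrs_in U v))
      end
  end.

(* lexicographically first MIS of G[U] w.r.t. pi (#|V| steps always suffice) *)
Definition lfmis (pi : {perm V}) (U : {set V}) : {set V} :=
  greedy_fuel pi #|V| U.

(* delta-prefix of U: the vertices of U whose position (0-based) among U in the
   order pi is < delta * |U|, i.e. the ceil(delta |U|) earliest vertices. *)
Definition prefix (R : realType) (U : {set V}) (pi : {perm V}) (delta : R)
  : {set V} :=
  [set v in U | ((#|[set u in U | (rank pi u < rank pi v)%N]|)%:R < delta * (#|U|)%:R)%R].

Definition round_step (R : realType) (pi : {perm V}) (delta : R) (U : {set V})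
  : {set V} :=
  let P := prefix U pi delta in
  let W := lfmis pi P in
  U :\: (P :|: nbrs_set W).

(* remaining vertex set after j rounds; round j (1-indexed) uses the prefix
   parameter [delta j U] where U is the current vertex set. *)
Fixpoint remaining (R : realType) (pi : {perm V}) (delta : nat -> {set V} -> R)
  (j : nat) : {set V} :=
  match j with
  | 0 => finset.setT
  | k.+1 => let U := remaining pi delta k in round_step pi (delta k.+1 U) U
  end.

End MIS.

From Pilot Require Import Defs.
From HB Require Import structures.
From mathcomp Require Import all_boot all_order all_fingroup all_algebra.
From mathcomp Require Import all_classical all_reals.
From mathcomp Require Import sequences exp ring.
(* [classical_sets] shadows [set0] and [subsetP]; restore the finite-set ones. *)
From mathcomp Require Import fintype finset.
Import Order.TTheory GRing.Theory Num.Theory.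
Set Implicit Arguments. Unset Strict Implicit. Unset Printing Implicit Defensive.

(* Only round [i] matters.  Condition on the set [U] remaining before it: the
   orders producing [U] are closed under relabelling the vertices of [U], and a
   uniform relabelling makes the prefix of round [i] a uniformly random
   sequence of [k >= delta |U|] vertices of [U].  Reveal the prefix one vertex
   at a time and fix [v]: while [v] survives with more than [Delta / 2^i]
   surviving neighbours, the next vertex is [v] or one of them with probability
   at least [Delta / (2^i |U|)], and then it is chosen (it has no chosen
   neighbour) and removes [v].  A swap argument with transpositions makes this
   an exact count, so [v] ends with high degree with probability at most
   [exp (- delta Delta / 2^i) <= n^-c]; a union bound over [v] concludes. *)

Section LexFirstMIS.
Variables (V : finType) (e : rel V).

Lemma rank_inj (p : {perm V}) : injective (rank p).
Proof. by move=> x y /val_inj/enum_rank_inj/perm_inj. Qed.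

Lemma rankM (r p : {perm V}) u : rank (r * p)%g u = rank p (r u).
Proof. by rewrite /rank permM. Qed.

Lemma in_nbrs_in (L : {set V}) v z : (z \in nbrs_in e L v) = (z \in L) && e v z.
Proof. by rewrite inE. Qed.

Lemma deg_in_sub (L L' : {set V}) v : L \subset L' -> deg_in e L v <= deg_in e L' v.
Proof.
move=> LL'; apply/subset_leq_card/subsetP => z.
by rewrite !in_nbrs_in => /andP[/(subsetP LL') -> ->].
Qed.

Lemma in_nbrs_setU1 v (A : {set V}) y :
  (y \in nbrs_set e (v |: A)) = e v y || (y \in nbrs_set e A).
Proof.
rewrite !inE; apply/existsP/orP => [[w]|[evy|/existsP[w wA]]].
- by rewrite !inE => /andP[/orP[/eqP->|wA] ewy]; [left|right; apply/existsP; exists w; rewrite wA].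
- by exists v; rewrite !inE eqxx evy.
- by exists w; move: wA; rewrite !inE => /andP[-> ->]; rewrite orbT.
Qed.

Lemma greedy_fuel_set0 p f : greedy_fuel e p f set0 = set0.
Proof. by case: f => //= f; case: pickP => // v; rewrite inE. Qed.

Lemma eq_greedy_fuel (p1 p2 : {perm V}) f (X : {set V}) :
  {in X, rank p1 =1 rank p2} -> greedy_fuel e p1 f X = greedy_fuel e p2 f X.
Proof.
elim: f X => [|f IH] X //= eqX.
have -> : [pick v in X | [forall u in X, rank p1 v <= rank p1 u]] =
          [pick v in X | [forall u in X, rank p2 v <= rank p2 u]].
  apply: eq_pick => v /=; case vX: (v \in X) => //=.
  by apply: eq_forallb => u; case uX: (u \in X); rewrite //= !eqX.
case: pickP => // v _; congr (_ |: _); apply: IH => u.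
by rewrite !inE => /andP[_ /eqX].
Qed.

Lemma eq_lfmis (p1 p2 : {perm V}) (X : {set V}) :
  {in X, rank p1 =1 rank p2} -> lfmis e p1 X = lfmis e p2 X.
Proof. exact: eq_greedy_fuel. Qed.

Lemma greedy_fuelS_min p f (X : {set V}) v : v \in X ->
  {in X, forall u, rank p v <= rank p u} ->
  greedy_fuel e p f.+1 X = v |: greedy_fuel e p f (X :\: (v |: nbrs_in e X v)).
Proof.
move=> vX vmin /=; case: pickP => [w /andP[wX /forall_inP wmin]|none].
  suff -> : w = v by [].
  by apply: (@rank_inj p); apply/eqP; rewrite eqn_leq wmin // vmin.
by case/negP: (negbT (none v)); rewrite vX; apply/forall_inP.
Qed.

Lemma greedy_fuel_setD1_last p f (X : {set V}) x : x \in X ->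
  {in X, forall y, y != x -> rank p y < rank p x} -> #|X| <= f ->
  greedy_fuel e p f X = greedy_fuel e p f (X :\ x) :|:
     (if x \in nbrs_set e (greedy_fuel e p f (X :\ x)) then set0 else [set x]).
Proof.
elim: f X => [|f IH] X xX xlast; first by rewrite leqn0 cards_eq0 => /eqP X0; rewrite X0 inE in xX.
move=> cardX; have [v vX vmin] := arg_minnP (rank p) xX.
rewrite (greedy_fuelS_min _ vX vmin).
have [vx|vx] := eqVneq v x.
  have Xx : X :\ x = set0.
    apply/setP => y; rewrite !inE; have [//|yx] := eqVneq y x; apply/negbTE/negP => yX.
    by have := xlast _ yX yx; rewrite -vx ltnNge vmin.
  have -> : X :\: (v |: nbrs_in e X v) = set0.
    apply/eqP; rewrite -subset0 -Xx vx; apply/subsetP => y.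
    by rewrite !inE => /andP[/norP[-> _] ->].
  rewrite Xx !greedy_fuel_set0 set0U setU0 vx inE.
  by case: existsP => // -[w]; rewrite inE.
have vminx : {in X :\ x, forall u, rank p v <= rank p u}.
  by move=> u; rewrite inE => /andP[_ /vmin].
rewrite (greedy_fuelS_min _ _ vminx); last by rewrite !inE vx.
set X' := X :\: (v |: nbrs_in e X v).
have -> : (X :\ x) :\: (v |: nbrs_in e (X :\ x) v) = X' :\ x.
  by apply/setP => y; rewrite !inE; case: (y == x); case: (y == v); case: (y \in X); case: (e v y).
have cardX' : #|X'| <= f.
  rewrite -ltnS; apply: leq_trans cardX; apply: proper_card; rewrite properE subsetDl.
  by apply/subsetPn; exists v => //; rewrite !inE eqxx.
have [xX'|xX'] := boolP (x \in X').
  have nevx : ~~ e v x by apply: contraTN xX' => evx; rewrite !inE xX evx orbT.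
  rewrite (IH X' xX' _ cardX'); last by move=> y; rewrite !inE => /andP[_ /xlast].
  by rewrite in_nbrs_setU1 (negbTE nevx) setUA.
have evx : e v x.
  by apply: contraNT xX'; rewrite !inE xX andbT eq_sym (negbTE vx) => /negbTE ->.
have -> : X' :\ x = X' by apply/setDidPl; rewrite disjoint_sym disjoints1.
by rewrite in_nbrs_setU1 evx setU0.
Qed.

Lemma lfmis_setD1_last p (X : {set V}) x : x \in X ->
  {in X, forall y, y != x -> rank p y < rank p x} ->
  lfmis e p (X :\ x) \subset lfmis e p X /\
  (x \notin nbrs_set e (lfmis e p (X :\ x)) -> x \in lfmis e p X).
Proof.
move=> xX xlast; rewrite /lfmis (greedy_fuel_setD1_last xX xlast (max_card _)).
by split=> [|/negbTE ->]; rewrite ?subsetUl // !inE eqxx orbT.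
Qed.

End LexFirstMIS.

Section SurvivorsOfPrefix.
Variables (V : finType) (e : rel V).
Implicit Types (U : {set V}) (p r : {perm V}).

Definition rank_in U p u := #|[set w in U | rank p w < rank p u]|.

Definition prefixn U p t := [set u in U | rank_in U p u < t].

(* [round_step] with a prefix of exactly [t] vertices. *)
Definition survivors U p t :=
  U :\: (prefixn U p t :|: nbrs_set e (lfmis e p (prefixn U p t))).

Lemma rank_in_lt U p u w : u \in U -> rank p u < rank p w -> rank_in U p u < rank_in U p w.
Proof.
move=> uU ruw; apply: proper_card; rewrite properE; apply/andP; split.
  by apply/subsetP => y; rewrite !inE => /andP[-> /ltn_trans->].
by apply/subsetPn; exists u; rewrite !inE ?uU ?ltnn.
Qed.

Lemma rank_in_lt_card U p u : u \in U -> rank_in U p u < #|U|.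
Proof.
move=> uU; apply: proper_card; rewrite properE; apply/andP; split.
  by apply/subsetP => y; rewrite !inE => /andP[->].
by apply/subsetPn; exists u => //; rewrite !inE ltnn andbF.
Qed.

Lemma rank_in_inj U p : {in U &, injective (rank_in U p)}.
Proof.
move=> u w uU wU eq_uw; have [ruw|rwu|/rank_inj//] := ltngtP (rank p u) (rank p w).
  by have := rank_in_lt uU ruw; rewrite eq_uw ltnn.
by have := rank_in_lt wU rwu; rewrite eq_uw ltnn.
Qed.

Lemma rank_inM U r p u : perm_on U r -> rank_in U (r * p)%g u = rank_in U p (r u).
Proof.
move=> rU; rewrite /rank_in -(card_imset _ (@perm_inj _ r)); apply: eq_card => y.
rewrite [in RHS]inE; apply/imsetP/andP => [[w]|[yU ry]].
  by rewrite !inE !rankM => /andP[wU rw] ->; rewrite perm_closed.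
exists (r^-1 y)%g; last by rewrite permKV.
by rewrite !inE !rankM permKV ry andbT -(perm_closed _ rU) permKV.
Qed.

Lemma rank_in_onto U p t : t < #|U| -> exists2 u, u \in U & rank_in U p u = t.
Proof.
move=> tU; have onto : map (rank_in U p) (enum U) =i iota 0 #|U|.
  apply: (uniq_min_size _ _ _).2.
  - by rewrite map_inj_in_uniq ?enum_uniq // => u w; rewrite !mem_enum; apply: rank_in_inj.
  - by move=> y /mapP[u]; rewrite mem_enum mem_iota add0n => /(rank_in_lt_card p) ? ->.
  - by rewrite size_map size_iota -cardE.
have : t \in iota 0 #|U| by rewrite mem_iota.
by rewrite -onto => /mapP[u]; rewrite mem_enum => uU ->; exists u.
Qed.

Lemma prefixnS U p t u : u \in U -> rank_in U p u = t ->
  [/\ prefixn U p t = prefixn U p t.+1 :\ u, u \in prefixn U p t.+1 &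
      {in prefixn U p t.+1, forall y, y != u -> rank p y < rank p u}].
Proof.
move=> uU rku; split.
- apply/setP => y; rewrite !inE; have [->|yu] /= := eqVneq y u; first by rewrite rku ltnn andbF.
  case yU: (y \in U) => //=; rewrite ltnS [rank_in U p y <= t]leq_eqVlt; case: eqP => //= rky.
  by case/eqP: yu; apply: (rank_in_inj (p := p) yU uU); rewrite rky rku.
- by rewrite inE uU rku ltnS leqnn.
- move=> y; rewrite inE => /andP[yU rky] yu.
  have [//|rgt|/rank_inj yue] := ltngtP (rank p y) (rank p u); last by rewrite yue eqxx in yu.
  by have := rank_in_lt uU rgt; rewrite rku ltnNge -ltnS rky.
Qed.

Lemma survivors_sub U p t : survivors U p t \subset U.
Proof. exact: subsetDl. Qed.

Lemma in_survivors U p t y : (y \in survivors U p t) =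
  [&& y \notin prefixn U p t, y \notin nbrs_set e (lfmis e p (prefixn U p t)) & y \in U].
Proof. by rewrite !inE negb_or andbA. Qed.

Lemma survivorsS_sub U p t : t < #|U| -> survivors U p t.+1 \subset survivors U p t.
Proof.
move=> tU; have [u uU rku] := rank_in_onto p tU.
have [prefixE uP ulast] := prefixnS uU rku.
have [sub_lfmis _] := lfmis_setD1_last e uP ulast; rewrite -prefixE in sub_lfmis.
apply/subsetP => y; rewrite !in_survivors => /and3P[yP yN ->]; rewrite andbT.
apply/andP; split.
  by apply: contra yP; rewrite !inE => /andP[-> /ltnW].
apply: contra yN; rewrite !inE => /existsP[w /andP[wG ew]]; apply/existsP; exists w.
by rewrite (subsetP sub_lfmis _ wG).
Qed.

(* The vertex at position [t] survives the [t]-prefix round only if it has no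
   chosen neighbour, so it is chosen in the [t.+1]-prefix round and removes
   itself and its neighbours. *)
Lemma survivorsS_kill U p t u v : u \in U -> rank_in U p u = t ->
  u \in survivors U p t -> (u == v) || e u v -> v \notin survivors U p t.+1.
Proof.
move=> uU rku uS huv; have [prefixE uP ulast] := prefixnS uU rku.
have [_ in_lfmis] := lfmis_setD1_last e uP ulast; rewrite -prefixE in in_lfmis.
have uG : u \in lfmis e p (prefixn U p t.+1).
  by apply: in_lfmis; move: uS; rewrite in_survivors => /and3P[_ -> _].
rewrite in_survivors !negb_and !negbK; case/orP: huv => [/eqP <-|euv]; first by rewrite uP.
rewrite [v \in nbrs_set _ _]inE; apply/orP; right; apply/orP; left.
by apply/existsP; exists u; rewrite uG euv.
Qed.

(* Relabelling vertices that survive anyway changes neither the prefix nor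
   its internal order. *)
Lemma survivors_perm_on U p r t (Y : {set V}) :
  perm_on Y r -> Y \subset survivors U p t -> survivors U (r * p)%g t = survivors U p t.
Proof.
move=> rY YS; have rU : perm_on U r := subset_trans rY (subset_trans YS (survivors_sub _ _ _)).
have YnP z : z \in Y -> z \notin prefixn U p t.
  by move/(subsetP YS); rewrite in_survivors => /andP[].
have prefixE : prefixn U (r * p)%g t = prefixn U p t.
  apply/setP => z; rewrite !inE rank_inM //.
  have [zY|zY] := boolP (z \in Y); last by rewrite (out_perm rY zY).
  have rzY : r z \in Y by rewrite perm_closed.
  move: (YnP _ zY) (YnP _ rzY); rewrite !inE (perm_closed _ rU).
  by case: (z \in U) => //= /negbTE -> /negbTE ->.
rewrite /survivors prefixE; congr (_ :\: (_ :|: nbrs_set e _)); apply: eq_lfmis => z zP.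
by rewrite rankM (out_perm rY) //; apply: contraNN (YnP z) _; rewrite zP.
Qed.

End SurvivorsOfPrefix.

Lemma card_set_mem_sum (T : finType) (A : {set T}) (P : pred T) :
  #|[set x in A | P x]| = \sum_(x in A) P x.
Proof. by rewrite -big_mkcondr /= sum1_card; apply: eq_card => x; rewrite inE. Qed.

Section HeavySurvivors.
Variables (R : realType) (V : finType) (e : rel V).
Hypothesis e_sym : symmetric e.
Variables (pi : {perm V}) (U : {set V}) (v : V) (thr : R).

(* As [r] ranges over [Sym U], [r * pi] ranges over the orders that agree with
   [pi] outside [U]: this is the randomness left once [U] is known. *)
Definition heavy t := [set r in Sym U | (v \in survivors e U (r * pi)%g t) &&
   (thr < (deg_in e (survivors e U (r * pi)%g t) v)%:R)%R].

Lemma in_heavy t r : (r \in heavy t) = [&& r \in Sym U, v \in survivors e U (r * pi)%g t &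
   (thr < (deg_in e (survivors e U (r * pi)%g t) v)%:R)%R].
Proof. by rewrite inE. Qed.

Lemma heavyS_sub t : t < #|U| -> heavy t.+1 \subset heavy t.
Proof.
move=> tU; apply/subsetP => r; rewrite !in_heavy => /and3P[-> vS degS] /=.
have sub := survivorsS_sub e (r * pi)%g tU.
by rewrite (subsetP sub _ vS) /=; apply: lt_le_trans degS _; rewrite ler_nat deg_in_sub.
Qed.

Section SwapNextVertex.
Variables (t : nat) (a : V).
Hypotheses (aU : a \in U) (rank_a : rank_in U pi a = t).

Let later := U :\: prefixn U pi t.

Lemma mem_later y : (y \in later) = (y \in U) && (t <= rank_in U pi y).
Proof. by rewrite !inE; case: (y \in U); rewrite /= ?andbT -?leqNgt. Qed.

Lemma perm_on_tperm_later y : y \in later -> perm_on U (tperm a y).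
Proof.
move=> yL; apply: subset_trans (tperm_on a y) _; apply/subsetP => z.
by rewrite !inE => /orP[]/eqP ->//; move: yL; rewrite mem_later => /andP[].
Qed.

(* [tperm a y] only exchanges vertices at positions [>= t] of [pi], so it does
   not change the [t]-prefix nor its order. *)
Lemma survivors_tperm r y : r \in Sym U -> y \in later ->
  survivors e U ((r * tperm a y) * pi)%g t = survivors e U (r * pi)%g t.
Proof.
rewrite inE => rU yL; have rtU := perm_onM rU (perm_on_tperm_later yL).
have y_late : (rank_in U pi y < t) = false by move: yL; rewrite mem_later ltnNge => /andP[_ ->].
have rank_tperm w : (rank_in U pi (tperm a y w) < t) = (rank_in U pi w < t).
  by case: (tpermP a y w) => [->|->|//]; rewrite rank_a ltnn.
have prefixE : prefixn U ((r * tperm a y) * pi)%g t = prefixn U (r * pi)%g t.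
  apply/setP => z; rewrite !inE; case zU: (z \in U) => //=.
  by rewrite !rank_inM // permM rank_tperm.
rewrite /survivors prefixE; congr (_ :\: (_ :|: nbrs_set e _)); apply: eq_lfmis => z.
rewrite inE => /andP[zU]; rewrite !rankM permM rank_inM //.
by case: tpermP => // ->; rewrite ?rank_a ?ltnn ?y_late.
Qed.

Lemma heavy_tperm r y : y \in later -> ((r * tperm a y)%g \in heavy t) = (r \in heavy t).
Proof.
move=> yL; have tU := perm_on_tperm_later yL.
have SymE : ((r * tperm a y)%g \in Sym U) = (r \in Sym U).
  rewrite !inE; apply/idP/idP => [rtU|rU]; last exact: perm_onM.
  by have := perm_onM rtU tU; rewrite -mulgA tperm2 mulg1.
rewrite !in_heavy SymE; case rU: (r \in Sym U) => //=.
by rewrite survivors_tperm.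
Qed.

(* [r * tperm a y] puts [r^-1 y] at position [t]; if that vertex is [v] or a
   surviving neighbour of [v], then [v] does not survive the [t.+1]-prefix. *)
Lemma card_later_heavyS r : r \in heavy t ->
  #|[set y in later | (r * tperm a y)%g \in heavy t.+1]|
  + deg_in e (survivors e U (r * pi)%g t) v <= #|later|.
Proof.
rewrite in_heavy => /and3P[rSym vS _]; move: (rSym); rewrite inE => rU.
set N := nbrs_in e (survivors e U (r * pi)%g t) v.
have rN_later : r @: N \subset later.
  apply/subsetP => y /imsetP[z]; rewrite in_nbrs_in in_survivors => /andP[/and3P[zP _ zU] _] ->.
  by rewrite !inE perm_closed // zU andbT; move: zP; rewrite !inE zU rank_inM.
have heavyS_later : [set y in later | (r * tperm a y)%g \in heavy t.+1] \subset later :\: r @: N.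
  apply/subsetP => y; rewrite inE => /andP[yL yH]; rewrite inE yL andbT.
  apply/imsetP => -[z zN yE]; move: zN; rewrite in_nbrs_in => /andP[zS evz].
  have zU : z \in U := subsetP (survivors_sub e _ _ _) _ zS.
  have rtU := perm_onM rU (perm_on_tperm_later yL).
  have := @survivorsS_kill _ e U ((r * tperm a y) * pi)%g t z v zU.
  rewrite rank_inM // permM -yE tpermR rank_a survivors_tperm // => /(_ erefl zS).
  by rewrite e_sym evz orbT => /(_ erefl); move: yH; rewrite in_heavy => /and3P[_ -> _].
rewrite -(cardsID (r @: N) later) (setIidPr rN_later) card_imset; last exact: perm_inj.
by rewrite addnC leq_add2l subset_leq_card.
Qed.

Lemma card_heavyS_double_count :
  #|later| * #|heavy t.+1|
  <= \sum_(r in heavy t) (#|later| - deg_in e (survivors e U (r * pi)%g t) v).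
Proof.
have tU : t < #|U| by rewrite -rank_a rank_in_lt_card.
have card_heavyS y : y \in later ->
    #|heavy t.+1| = \sum_(r in heavy t) ((r * tperm a y)%g \in heavy t.+1 : nat).
  move=> yL; rewrite -sum1_card big_mkcond /= (reindex_inj (mulIg (tperm a y))) /=.
  rewrite [RHS]big_mkcond /=; apply: eq_bigr => r _.
  case rH: ((r * tperm a y)%g \in heavy t.+1); last by case: (r \in heavy t).
  by rewrite -(heavy_tperm r yL) (subsetP (heavyS_sub tU) _ rH).
rewrite -sum_nat_const (eq_bigr _ card_heavyS) exchange_big /=; apply: leq_sum => r rH.
rewrite -card_set_mem_sum leq_subRL; first by rewrite addnC card_later_heavyS.
exact: leq_trans (leq_addl _ _) (card_later_heavyS rH).
Qed.

End SwapNextVertex.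

Lemma card_heavyS_le t : (0 <= thr)%R -> t < #|U| ->
  (#|heavy t.+1|%:R <= #|heavy t|%:R * (1 - thr / #|U|%:R) :> R)%R.
Proof.
move=> thr0 tU; have [a aU rank_a] := rank_in_onto pi tU.
set q := #|U :\: prefixn U pi t|.
have q_gt0 : 0 < q by apply/card_gt0P; exists a; rewrite !inE aU rank_a ltnn.
have qU : q <= #|U| by apply/subset_leq_card/subsetDl.
have deg_le r : r \in heavy t -> deg_in e (survivors e U (r * pi)%g t) v <= q.
  by move=> rH; apply: leq_trans (leq_addl _ _) (card_later_heavyS aU rank_a rH).
have double_count : (q%:R * #|heavy t.+1|%:R <= #|heavy t|%:R * (q%:R - thr) :> R)%R.
  apply: le_trans (_ : (\sum_(r in heavy t) (q%:R - thr) <= _)%R); last first.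
    by rewrite sumr_const mulrC mulr_natr.
  rewrite -natrM; apply: le_trans (_ : (\sum_(r in heavy t)
    (q - deg_in e (survivors e U (r * pi)%g t) v))%:R <= _)%R.
    by rewrite ler_nat (card_heavyS_double_count aU rank_a).
  rewrite natr_sum; apply: ler_sum => r rH; rewrite natrB ?deg_le // lerB //.
  by move: rH; rewrite in_heavy => /and3P[_ _ /ltW].
have U_gt0 : (0 < #|U|%:R :> R)%R by rewrite ltr0n (leq_trans q_gt0 qU).
have shrink : (q%:R - thr <= q%:R * (1 - thr / #|U|%:R) :> R)%R.
  rewrite mulrBr mulr1 lerB // mulrA ler_pdivrMr // [leRHS]mulrC ler_wpM2r //.
  by rewrite ler_nat.
rewrite -(ler_pM2l (_ : 0 < q%:R)%R) ?ltr0n //; apply: le_trans double_count _.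
by rewrite mulrCA ler_wpM2l.
Qed.

Lemma card_heavy_le t : (0 <= thr)%R -> t <= #|U| ->
  (#|heavy t|%:R <= #|Sym U|%:R * expR (- (thr / #|U|%:R) * t%:R) :> R)%R.
Proof.
move=> thr0; elim: t => [|t IH] tU.
  rewrite mulr0 expR0 mulr1 ler_nat subset_leq_card //.
  by apply/subsetP => r; rewrite in_heavy => /andP[].
have := card_heavyS_le thr0 tU; set x := (thr / #|U|%:R)%R => step.
rewrite -natr1 mulrDr mulr1 expRD mulrA; apply: le_trans step _.
have [x_le1|x_gt1] := lerP 0 (1 - x).
  by apply: ler_pM => //; [exact: IH (ltnW tU) | exact: expR_ge1Dx].
apply: le_trans (_ : 0 <= _)%R; first by rewrite mulr_ge0_le0 // ltW.
by rewrite !mulr_ge0 // ltW // expR_gt0.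
Qed.

End HeavySurvivors.

Lemma downward_closed_cut (P : pred nat) m : (forall p q, p <= q -> P q -> P p) ->
  exists2 k, k <= m & forall q, q < m -> (q < k) = P q.
Proof.
move=> Pdown; elim: m => [|m [k km Pk]]; first by exists 0.
have [km'|mk] := ltnP k m.
  exists k => [|q]; first exact: leqW.
  rewrite ltnS leq_eqVlt => /predU1P[->|]; last exact: Pk.
  by rewrite ltnNge ltnW //; apply/esym/negP => /(Pdown k m (ltnW km')); rewrite -Pk ?ltnn.
have k_eq : k = m by apply/eqP; rewrite eqn_leq km.
subst k.
have [Pm|nPm] := boolP (P m).
  exists m.+1 => // q qm; rewrite qm; move: qm; rewrite ltnS leq_eqVlt.
  by case/predU1P => [->|qm]; rewrite ?Pm // -Pk qm.
exists m => [|q]; first exact: leqnSn.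
by rewrite ltnS leq_eqVlt => /predU1P[->|/Pk//]; rewrite ltnn (negbTE nPm).
Qed.

Section RoundsAndRelabelling.
Variables (R : realType) (V : finType) (e : rel V).

Lemma round_step_survivors (U : {set V}) (d : R) :
  exists k, [/\ k <= #|U|, (d <= 1 -> d * #|U|%:R <= k%:R)%R &
                forall p, round_step e p d U = survivors e U p k].
Proof.
set y := (d * #|U|%:R)%R.
have [k kU cutk] : exists2 k, k <= #|U| & forall q, q < #|U| -> (q < k) = (q%:R < y)%R.
  by apply: downward_closed_cut => p q pq; apply: le_lt_trans; rewrite ler_nat.
exists k; split=> // [d_le1|p].
  case: (ltnP k #|U|) => [kU'|Uk]; first by rewrite leNgt -cutk ?ltnn.
  have -> : k = #|U| by apply/eqP; rewrite eqn_leq kU.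
  by rewrite ler_piMl.
suff prefixE : Defs.prefix U p d = prefixn U p k by rewrite /round_step prefixE.
by apply/setP => z; rewrite !inE; case zU: (z \in U); rewrite //= cutk // rank_in_lt_card.
Qed.

Lemma round_step_sub p (d : R) (U : {set V}) : round_step e p d U \subset U.
Proof. exact: subsetDl. Qed.

Lemma round_step_perm_on p r (d : R) (U Y : {set V}) :
  perm_on Y r -> Y \subset round_step e p d U ->
  round_step e (r * p)%g d U = round_step e p d U.
Proof.
have [k [_ _ roundE]] := round_step_survivors U d.
by rewrite !roundE; apply: survivors_perm_on.
Qed.

Variable delta : nat -> {set V} -> R.

Lemma remaining_sub p j j' : j <= j' ->
  remaining e p delta j' \subset remaining e p delta j.
Proof.
move=> /subnK <-; elim: (j' - j) => [|n IH]; first by rewrite add0n.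
exact: subset_trans (round_step_sub _ _ _) IH.
Qed.

Lemma remaining_perm_on p r j0 : perm_on (remaining e p delta j0) r ->
  forall j, j <= j0 -> remaining e (r * p)%g delta j = remaining e p delta j.
Proof.
move=> rRem; elim => [|j IH] jj0 //=; rewrite IH ?(ltnW jj0) //.
exact: round_step_perm_on rRem (remaining_sub p jj0).
Qed.

End RoundsAndRelabelling.

Lemma card_le_sum_cover (T I : finType) (A : {set T}) (E : I -> {set T}) :
  (forall x, x \in A -> exists i, x \in E i) -> #|A| <= \sum_i #|E i|.
Proof.
move=> cover; have sub : A \subset \bigcup_i E i.
  by apply/subsetP => x /cover[i xi]; apply/bigcupP; exists i.
apply: leq_trans (subset_leq_card sub) _.
elim/big_rec2: _ => [|i B n _ IH]; first by rewrite cards0.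
by apply: leq_trans (leq_card_setU _ _) _; rewrite leq_add2l.
Qed.

Section RoundHighDegree.
Variables (R : realType) (V : finType) (e : rel V).
Hypothesis e_sym : symmetric e.

Lemma card_round_step_high_degree (pi : {perm V}) (U : {set V}) (d thr : R) :
  (0 <= thr)%R -> (d <= 1)%R ->
  (#|[set r in Sym U | ~~ [forall v in round_step e (r * pi)%g d U,
      ((deg_in e (round_step e (r * pi)%g d U) v)%:R <= thr)%R]]|%:R
   <= #|V|%:R * #|Sym U|%:R * expR (- (thr * d)) :> R)%R.
Proof.
move=> thr0 d_le1; have [k [kU dk roundE]] := round_step_survivors e U d.
have [U0|U_gt0] := posnP #|U|.
  suff -> : [set r in Sym U | ~~ [forall v in round_step e (r * pi)%g d U,
      ((deg_in e (round_step e (r * pi)%g d U) v)%:R <= thr)%R]] = set0.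
    by rewrite cards0 !mulr_ge0 // expR_ge0.
  apply/setP => r; rewrite in_set in_set0 roundE; apply/negbTE; rewrite negb_and negbK.
  apply/orP; right; apply/forall_inP => z /(subsetP (survivors_sub e U _ k)).
  by move/eqP: U0; rewrite cards_eq0 => /eqP ->; rewrite in_set0.
apply: le_trans (_ : \sum_v #|heavy e pi U v thr k|%:R <= _)%R.
  rewrite -natr_sum ler_nat; apply: card_le_sum_cover => r.
  rewrite inE roundE => /andP[rU /forall_inPn[v vS deg_gt]].
  by exists v; rewrite in_heavy rU vS ltNge.
apply: le_trans (_ : \sum_(v : V) (#|Sym U|%:R * expR (- (thr * d))) <= _)%R; last first.
  by rewrite sumr_const -[leRHS]mulrA [leRHS]mulrC mulr_natr.
apply: ler_sum => v _.
apply: le_trans (card_heavy_le e_sym pi v thr0 kU) _; rewrite ler_wpM2l // ler_expR.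
by rewrite mulNr lerN2 mulrAC ler_pdivlMr ?ltr0n // -mulrA ler_wpM2l ?dk.
Qed.

End RoundHighDegree.

Section Conditioning.
Variable R : numDomainType.

(* Each translation by [r \in H] permutes [A], so [x \in A] with [r * x \in B]
   are as many as the points of [B :&: A]. *)
Lemma card_setI_le_mulg_stable (gT : finGroupType) (H : {group gT}) (A B : {set gT})
    (eps : R) :
  (forall r x, r \in H -> (r * x \in A) = (x \in A))%g ->
  (forall x, x \in A -> #|[set r in H | (r * x)%g \in B]|%:R <= #|H|%:R * eps)%R ->
  (#|B :&: A|%:R <= #|A|%:R * eps)%R.
Proof.
move=> stableA bound.
have double_count : (#|H| * #|B :&: A| = \sum_(x in A) #|[set r in H | (r * x)%g \in B]|)%N.
  under [RHS]eq_bigr => x _ do rewrite card_set_mem_sum.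
  rewrite exchange_big /= -sum_nat_const; apply: eq_bigr => r rH.
  rewrite (reindex_inj (mulgI r^-1%g)) (eq_bigl (mem A)) => [|y]; last first.
    by rewrite /= stableA ?groupV.
  under eq_bigr do rewrite mulKVg.
  by rewrite -card_set_mem_sum; apply: eq_card => y; rewrite !inE andbC.
have H_gt0 : (0 < #|H|%:R :> R)%R by rewrite ltr0n cardG_gt0.
rewrite -(ler_pM2l H_gt0) -natrM double_count natr_sum mulrCA mulr_natl -sumr_const.
by apply: ler_sum.
Qed.

Lemma card_le_fibers (T J : finType) (f : T -> J) (B : {set T}) (eps : R) :
  (forall j, #|B :&: [set x | f x == j]|%:R <= #|[set x | f x == j]|%:R * eps)%R ->
  (#|B|%:R <= #|T|%:R * eps)%R.
Proof.
have card_fibers (A : {set T}) : #|A| = (\sum_j #|A :&: [set x | f x == j]|)%N.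
  rewrite -sum1_card (partition_big f xpredT) //=; apply: eq_bigr => j _.
  by rewrite sum1dep_card; apply: eq_card => x; rewrite !inE.
move=> bound; rewrite (card_fibers B) -cardsT (card_fibers setT) !natr_sum mulr_suml.
by apply: ler_sum => j _; rewrite setTI.
Qed.

End Conditioning.

Section HighDegreeAfterRound.
Variables (R : realType) (V : finType) (e : rel V).
Hypothesis e_sym : symmetric e.
Variables (delta : nat -> {set V} -> R) (i : nat).

Lemma remaining_mulg_Sym U r pi : r \in Sym U ->
  (remaining e (r * pi)%g delta i == U) = (remaining e pi delta i == U).
Proof.
rewrite inE => rU; apply/eqP/eqP => remE; last by rewrite (remaining_perm_on (j0 := i)) ?remE.
have rVrem : perm_on (remaining e (r * pi)%g delta i) r^-1%g by rewrite remE perm_onV.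
by rewrite -remE -(remaining_perm_on rVrem (leqnn _)) mulKg.
Qed.

Lemma card_remaining_high_degree (thr L : R) : (0 <= thr)%R ->
  (forall U, delta i.+1 U <= 1)%R -> (forall U, L <= thr * delta i.+1 U)%R ->
  (#|[set pi : {perm V} | ~~ [forall v in remaining e pi delta i.+1,
        ((deg_in e (remaining e pi delta i.+1) v)%:R <= thr)%R]]|%:R
   <= #|[set: {perm V}]|%:R * (#|V|%:R * expR (- L)))%R.
Proof.
move=> thr0 d_le1 L_le; rewrite cardsT.
apply: (@card_le_fibers R _ _ (fun pi => remaining e pi delta i)) => U.
apply: (@card_setI_le_mulg_stable R _ (Sym_group U)) => [r pi rU|pi].
  by rewrite !in_set remaining_mulg_Sym.
rewrite in_set => /eqP remE.
have -> : [set r in Sym U | (r * pi)%g \in [set pi | ~~ [forall v in remaining e pi delta i.+1,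
        ((deg_in e (remaining e pi delta i.+1) v)%:R <= thr)%R]]] =
    [set r in Sym U | ~~ [forall v in round_step e (r * pi)%g (delta i.+1 U) U,
        ((deg_in e (round_step e (r * pi)%g (delta i.+1 U) U) v)%:R <= thr)%R]].
  apply/setP => r; rewrite [LHS]in_set [RHS]in_set; apply: andb_id2l => rU.
  have /eqP remrE : remaining e (r * pi)%g delta i == U by rewrite remaining_mulg_Sym // remE.
  by rewrite in_set /= remrE.
apply: le_trans (card_round_step_high_degree e_sym pi U thr0 (d_le1 U)) _.
by rewrite mulrCA mulrA ler_wpM2l ?mulr_ge0 // ler_expR lerN2.
Qed.

End HighDegreeAfterRound.

Lemma natr_mul_expRN_ln (R : realType) (n c : nat) : 0 < n ->
  (n%:R * expR (- (c.+1%:R * ln (n%:R : R))) = (n%:R ^+ c)^-1 :> R)%R.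
Proof.
move=> n_gt0; have n_pos : ((n%:R : R) \in Num.pos)%R by rewrite posrE ltr0n.
rewrite -mulrN expRM_natl expRN (lnK n_pos) exprS mulrA divff ?mul1r ?exprVn //.
by rewrite pnatr_eq0 -lt0n.
Qed.

Theorem corollary2 (R : realType) :
  forall c' : nat, exists c : R, (0 < c)%R /\
  forall (V : finType) (e : rel V) (Delta : nat),
    simple_graph e ->
    (forall v : V, deg_in e finset.setT v <= Delta) ->
    forall (i : nat) (delta : nat -> {set V} -> R),
      (forall (j : nat) (U : {set V}), 1 <= j <= i ->
         (0 < delta j U)%R /\ (delta j U <= 1)%R /\
         (c * 2%:R ^+ j * ln (#|V|%:R : R) / (Delta%:R : R) <= delta j U)%R) ->
      (((#|[set pi : {perm V} | ~~ [forall v in remaining e pi delta i,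
              ((deg_in e (remaining e pi delta i) v)%:R
                 <= (Delta%:R : R) / 2%:R ^+ i)%R]]|)%:R : R)
        <= (#|[set: {perm V}]|)%:R / (#|V|%:R) ^+ c')%R.
Proof.
move=> c'; exists (c'.+1)%:R%R; split=> [|V e Delta [e_sym _] deg_le i delta delta_ok].
  by rewrite ltr0n.
have pow2_gt0 : (0 < 2%:R ^+ i :> R)%R by rewrite exprn_gt0 ?ltr0n.
have thr_ge0 : (0 <= Delta%:R / 2%:R ^+ i :> R)%R by rewrite divr_ge0 // ltW.
set B := [set pi | _]; have [->|[pi0]] := set_0Vmem B.
  by rewrite cards0 divr_ge0 ?exprn_ge0.
rewrite inE => /forall_inPn[v0 _]; rewrite -ltNge => deg_gt.
have deg_le0 : (deg_in e (remaining e pi0 delta i) v0 <= Delta)%N.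
  by apply: leq_trans (deg_le v0); apply: deg_in_sub; apply: subsetT.
have Delta_gt0 : (0 < Delta)%N.
  rewrite lt0n; apply: contraTneq deg_gt => Delta0.
  by move: deg_le0; rewrite Delta0 leqn0 => /eqP ->; rewrite mul0r ltxx.
case: i => [|i] in delta_ok B deg_gt deg_le0 pow2_gt0 thr_ge0 *.
  by move: deg_gt; rewrite expr0 divr1 ltr_nat ltnNge deg_le0.
have n_gt0 : (0 < #|V|)%N by apply/card_gt0P; exists v0.
apply: le_trans (card_remaining_high_degree e_sym (L := (c'.+1)%:R * ln #|V|%:R)%R
  thr_ge0 _ _) _.
- by move=> U; have [_ []] := delta_ok i.+1 U (leqnn _).
- move=> U; have [_ [_ delta_ge]] := delta_ok i.+1 U (leqnn _).
  apply: le_trans (ler_wpM2l thr_ge0 delta_ge); rewrite le_eqVlt; apply/orP; left.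
  by apply/eqP; field; rewrite pnatr_eq0 -lt0n Delta_gt0 expf_neq0 // pnatr_eq0.
by rewrite natr_mul_expRN_ln.
Qed.
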